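(* Let $S_{(1,1)}(x)=\sum_{p\ge1}\binom{2p}{p}x^{2p}$ be the generating function of nonempty $(1,1)$-balanced words over two letters, and $C_{(1,1)}(x)$ the generating function of $(1,1)$-balanced necklaces (by length). Then $$C_{(1,1)}(x)=\sum_{n\ge1}\frac{\varphi(n)}{n}\sum_{p\ge1}\frac{1}{2p}\binom{2p}{p}x^{2np},\qquad x\,C_{(1,1)}'(x)=\sum_{n\ge1}\varphi(n)\,S_{(1,1)}(x^n).$$ Equivalently, the pointed class $\Theta Cyc_{(1,1)}$ is isomorphic (same number of objects of each size) to $\sum_{n>0}\varphi(n)\,Rep_n(Seq_{(1,1)})$. *)

From HB Require Import structures.
From mathcomp Require Import all_boot all_order all_algebra.
Set Implicit Arguments. Unset Strict Implicit. Unset Printing Implicit Defensive.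
Import Order.TTheory GRing.Theory Num.Theory.

Definition balanced (N : nat) (w : N.-tuple bool) : bool :=
  count_mem true w == count_mem false w.

Definition necklace_of (N : nat) (w : N.-tuple bool) : {set N.-tuple bool} :=
  [set rot_tuple i w | i : 'I_N].

Definition balanced_necklaces (N : nat) : {set {set N.-tuple bool}} :=
  [set necklace_of w | w in [pred w : N.-tuple bool | balanced w]].

(* C_N : coefficient of x^N in C_(1,1)(x). *)
Definition Ccoef (N : nat) : nat := #|balanced_necklaces N|.

(* S_m : coefficient of x^m in S_(1,1)(x) = sum_{p>=1} C(2p,p) x^(2p). *)
Definition Scoef (m : nat) : nat :=
  if (0 < m) && ~~ odd m then 'C(m, m./2) else 0.

From mathcomp Require Import all_boot all_order all_algebra all_fingroup zify.
Import Order.TTheory GRing.Theory Num.Theory.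
Set Implicit Arguments. Unset Strict Implicit. Unset Printing Implicit Defensive.

(* Burnside's lemma for the rotation action of Z/N on balanced words of length
   N gives N C_N = sum_a #{balanced words fixed by the rotation by a}.  The
   cyclic periods of a word form a set closed under gcd with N, so a word is
   fixed by the rotation by a iff it is the N/g-fold repetition of its prefix of
   length g = gcd(a, N); it is balanced iff that prefix is, so there are S_g of
   them.  Exactly totient(n) residues a have gcd(a, N) = N/n, which gives the
   second identity.  Dividing by N gives the first: S_(N/n) vanishes unless
   N/n = 2p, and then totient(n) S_(2p) / N = totient(n)/n * C(2p,p)/(2p). *)

Definition periodic (T : Type) (f : nat -> T) (p : nat) := forall i, f (i + p) = f i.

Lemma periodic_mull (T : Type) (f : nat -> T) p m :
  periodic f p -> periodic f (m * p).
Proof.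
move=> fp; elim: m => [|m IHm] i; first by rewrite mul0n addn0.
by rewrite mulSnr addnA fp IHm.
Qed.

Lemma periodic_dvdn (T : Type) (f : nat -> T) p q :
  p %| q -> periodic f p -> periodic f q.
Proof. by move=> /dvdnP[m ->]; apply: periodic_mull. Qed.

Lemma periodic_modn (T : Type) (f : nat -> T) p i : periodic f p -> f i = f (i %% p).
Proof. by move=> fp; rewrite {1}(divn_eq i p) addnC periodic_mull. Qed.

Lemma periodic_gcdn (T : Type) (f : nat -> T) a n : 0 < n ->
  periodic f a -> periodic f n -> periodic f (gcdn a n).
Proof.
move=> n_gt0 fa fn i; have [x _ /dvdnP[c Bez]] := Bezoutl a n_gt0.
by rewrite -(periodic_mull x fa) -addnA gcdnC Bez periodic_mull.
Qed.

Section CyclicWords.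
Variables (T : Type) (x0 : T).
Implicit Types (s u : seq T).

Definition cnth s i := nth x0 s (i %% size s).

Lemma nth_rot s m i : m <= size s -> i < size s ->
  nth x0 (rot m s) i = nth x0 s ((i + m) %% size s).
Proof.
move=> m_le i_lt; rewrite nth_cat size_drop; case: ltnP => [i_lt' | i_ge].
  by rewrite nth_drop (addnC m) modn_small //; lia.
have sum_ge : size s <= i + m by lia.
have ->: (i + m) %% size s = i + m - size s.
  by rewrite -{1}(subnK sum_ge) modnDr modn_small //; lia.
by rewrite nth_take; [congr nth|]; lia.
Qed.

Lemma periodic_cnth_size s : periodic (cnth s) (size s).
Proof. by move=> i; rewrite /cnth modnDr. Qed.

Lemma rot_id_periodic s a : 0 < size s -> a <= size s ->
  rot a s = s <-> periodic (cnth s) a.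
Proof.
move=> s_gt0 a_le; split=> [rot_s i | sa].
  rewrite /cnth -modnDml -nth_rot ?rot_s ?ltn_mod //.
apply: (@eq_from_nth _ x0) => [|i i_lt]; first by rewrite size_rot.
rewrite size_rot in i_lt; rewrite nth_rot // -/(cnth s (i + a)) sa /cnth modn_small //.
Qed.

Lemma nth_flatten_nseq u k i : i < k * size u ->
  nth x0 (flatten (nseq k u)) i = nth x0 u (i %% size u).
Proof.
elim: k i => [|k IHk] i; first by rewrite mul0n.
rewrite mulSn /= nth_cat => i_lt; case: ltnP => [i_lt' | i_ge].
  by rewrite modn_small.
rewrite IHk; last by rewrite ltn_subLR.
by rewrite -{2}(subnK i_ge) modnDr.
Qed.

Lemma size_flatten_nseq u k : size (flatten (nseq k u)) = k * size u.
Proof. by rewrite size_flatten /shape map_nseq sumn_nseq mulnC. Qed.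

Lemma count_flatten_nseq (P : pred T) u k :
  count P (flatten (nseq k u)) = k * count P u.
Proof. by rewrite count_flatten map_nseq sumn_nseq mulnC. Qed.

Lemma take_flatten_nseq u k : 0 < k -> take (size u) (flatten (nseq k u)) = u.
Proof. by case: k => //= k _; rewrite take_size_cat. Qed.

Lemma periodic_cnth_flatten s d : 0 < size s -> 0 < d -> d %| size s ->
  periodic (cnth s) d <-> s = flatten (nseq (size s %/ d) (take d s)).
Proof.
move=> s_gt0 d_gt0 d_dvd; set k := size s %/ d.
have size_take_d : size (take d s) = d by rewrite size_takel // dvdn_leq.
have size_s : k * size (take d s) = size s by rewrite size_take_d divnK.
split=> [sd | s_flat].
  apply: (@eq_from_nth _ x0) => [|i i_lt]; first by rewrite size_flatten_nseq.
  rewrite nth_flatten_nseq ?size_s // size_take_d nth_take ?ltn_mod //.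
  have i_mod_lt : i %% d < size s.
    by rewrite (leq_trans _ (dvdn_leq s_gt0 d_dvd)) ?ltn_mod.
  by have := periodic_modn i sd; rewrite /cnth (modn_small i_lt) (modn_small i_mod_lt).
have cnthE j : cnth s j = nth x0 (take d s) (j %% d).
  rewrite /cnth {1}s_flat nth_flatten_nseq ?size_s ?ltn_mod // size_take_d.
  by rewrite modn_dvdm.
by move=> i; rewrite !cnthE modnDr.
Qed.

End CyclicWords.

Lemma rot_id_flatten (T : Type) (s : seq T) a (g := gcdn a (size s)) :
  0 < size s -> a <= size s ->
  rot a s = s <-> s = flatten (nseq (size s %/ g) (take g s)).
Proof.
(* A nonempty word supplies the default element needed by [nth]. *)
case: s @g => [//|x0 s'] g s_gt0 a_le; set s := x0 :: s' in s_gt0 a_le g *.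
have g_gt0 : 0 < g by rewrite gcdn_gt0 s_gt0 orbT.
have sa_sg : periodic (cnth x0 s) a <-> periodic (cnth x0 s) g.
  split=> [sa | sg]; last exact: periodic_dvdn (dvdn_gcdl _ _) sg.
  exact: periodic_gcdn s_gt0 sa (periodic_cnth_size x0 s).
have := periodic_cnth_flatten x0 s_gt0 g_gt0 (dvdn_gcdr a (size s)).
have := rot_id_periodic x0 s_gt0 a_le; tauto.
Qed.

Lemma balanced_flatten_nseq (u : seq bool) k : 0 < k ->
  (count_mem true (flatten (nseq k u)) == count_mem false (flatten (nseq k u)))
  = (count_mem true u == count_mem false u).
Proof. by move=> k_gt0; rewrite !count_flatten_nseq eqn_pmul2l. Qed.

Section RotationFixedWords.
Variables (N a : nat).
Hypotheses (N_gt0 : 0 < N) (a_le : a <= N).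
Let g := gcdn a N.
Let k := N %/ g.

Let g_dvd : g %| N. Proof. exact: dvdn_gcdr. Qed.
Let k_gt0 : 0 < k. Proof. by rewrite divn_gt0 ?gcdn_gt0 ?N_gt0 ?orbT // dvdn_leq. Qed.
Let size_repeat (u : g.-tuple bool) : size (flatten (nseq k (val u))) == N.
Proof. by rewrite size_flatten_nseq size_tuple divnK. Qed.

Let take_repeat (u : g.-tuple bool) : take g (flatten (nseq k (val u))) = u.
Proof. by have := take_flatten_nseq (val u) k_gt0; rewrite size_tuple. Qed.

Definition repeat_tuple (u : g.-tuple bool) : N.-tuple bool := Tuple (size_repeat u).

Lemma repeat_tuple_inj : injective repeat_tuple.
Proof.
move=> u v /(congr1 (take g \o val)) /=.
by rewrite !take_repeat => /val_inj.
Qed.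

Lemma card_balanced_rot_fixed :
  #|[set w : N.-tuple bool | balanced w & rot a w == w]| =
  #|[set u : g.-tuple bool | balanced u]|.
Proof.
suff -> : [set w : N.-tuple bool | balanced w & rot a w == w] =
    repeat_tuple @: [set u : g.-tuple bool | balanced u].
  exact/card_imset/repeat_tuple_inj.
apply/setP => w.
rewrite inE; apply/andP/imsetP => [[w_bal /eqP w_fixed] | [u]].
  have size_w : size w = N by rewrite size_tuple.
  have w_flat : (w : seq bool) = flatten (nseq k (take g w)).
    by move: w_fixed; rewrite rot_id_flatten size_w.
  have size_u : size (take g w) == g by rewrite size_takel // size_w dvdn_leq.
  exists (Tuple size_u); last exact: val_inj.
  by rewrite inE /balanced -(balanced_flatten_nseq _ k_gt0) -/g -w_flat.
rewrite inE /balanced => u_bal ->; split.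
  by rewrite balanced_flatten_nseq.
apply/eqP/rot_id_flatten; rewrite /= ?size_flatten_nseq ?size_tuple ?divnK //.
by rewrite -/g -/k take_repeat.
Qed.

End RotationFixedWords.

Section BalancedWords.
Variable m : nat.

Definition indicator_tuple (A : {set 'I_m}) : m.-tuple bool := [tuple i \in A | i < m].

Lemma count_indicator_tuple A : count_mem true (indicator_tuple A) = #|A|.
Proof.
rewrite /= count_map enumT cardE /enum_mem size_filter.
by apply: eq_count => i; rewrite /preim /= eqb_id.
Qed.

Lemma indicator_tuple_inj : injective indicator_tuple.
Proof.
move=> A B eqAB; apply/setP => i.
by have := congr1 (fun t : m.-tuple bool => tnth t i) eqAB; rewrite !tnth_mktuple.
Qed.

Lemma card_count_mem_true j :
  #|[set u : m.-tuple bool | count_mem true u == j]| = 'C(m, j).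
Proof.
rewrite -[m in 'C(m, _)]card_ord -card_draws -(card_imset _ indicator_tuple_inj).
congr #|pred_of_set _|; apply/setP => u; rewrite inE; apply/idP/imsetP.
  have uE : indicator_tuple [set i | tnth u i] = u.
    by apply: eq_from_tnth => i; rewrite tnth_mktuple inE.
  by exists [set i | tnth u i]; rewrite // inE -count_indicator_tuple uE.
by case=> A; rewrite inE => /eqP <- ->; rewrite count_indicator_tuple.
Qed.

Lemma balancedE (u : m.-tuple bool) :
  balanced u = ~~ odd m && (count_mem true u == m./2).
Proof.
have count_false : count_mem false u = size u - count_mem true u.
  by rewrite -(count_predC (pred1 true)) addKn; apply: eq_count; case.
have := count_size (pred1 true) u; rewrite /balanced count_false size_tuple.
move: (count_mem true u) => c c_le; have := odd_double_half m.
case: (odd m) => /= m_half; first by apply/negbTE/eqP; lia.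
by apply/eqP/eqP; lia.
Qed.

Lemma card_balanced : 0 < m -> #|[set u : m.-tuple bool | balanced u]| = Scoef m.
Proof.
move=> m_gt0; rewrite /Scoef m_gt0 /=; case: ifP => m_even.
  rewrite -card_count_mem_true; congr #|pred_of_set _|.
  by apply/setP => u; rewrite !inE balancedE m_even.
apply/eqP; rewrite cards_eq0; apply/eqP/setP => u.
by rewrite !inE balancedE m_even.
Qed.
End BalancedWords.

Lemma big_nat_mul_dvd (F : nat -> nat) n d : 0 < d ->
  (forall a, ~~ (d %| a) -> F a = 0) ->
  \sum_(0 <= a < n * d) F a = \sum_(0 <= b < n) F (b * d).
Proof.
move=> d_gt0 F_dvd; elim: n => [|n IHn]; first by rewrite mul0n !big_geq.
rewrite big_nat_recr //= -IHn mulSnr (@big_cat_nat _ _ _ (n * d)) ?leq_addr //=.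
have nd_lt : n * d < n * d + d by rewrite -{1}(addn0 (n * d)) ltn_add2l.
congr (_ + _); rewrite big_ltn // big_nat_cond big1 ?addn0 // => a.
rewrite andbT => /andP[a_gt a_lt]; apply: F_dvd.
have r_gt0 : 0 < a - n * d by rewrite subn_gt0.
have r_lt : a - n * d < d by rewrite ltn_subLR // ltnW.
rewrite -(subnKC (ltnW a_gt)) dvdn_addr ?dvdn_mull //.
by apply/negP => /(dvdn_leq r_gt0); rewrite leqNgt r_lt.
Qed.

Lemma count_gcdn_eq N n : 0 < N -> 0 < n -> n %| N ->
  \sum_(a < N) (gcdn a N == N %/ n) = totient n.
Proof.
move=> N_gt0 n_gt0 n_dvd; have := divnK n_dvd; rewrite mulnC.
have : 0 < N %/ n by rewrite divn_gt0 // dvdn_leq.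
move: (N %/ n) => d d_gt0 N_eq; rewrite -{}N_eq.
rewrite -(big_mkord xpredT (fun a => nat_of_bool (gcdn a (n * d) == d))).
rewrite big_nat_mul_dvd // => [|a d_ndvd]; last first.
  by apply/eqP; rewrite eqb0; apply: contra d_ndvd => /eqP <-; apply: dvdn_gcdl.
rewrite totient_count_coprime; apply: eq_bigr => b _.
by rewrite -muln_gcdl -{2}(mul1n d) eqn_pmul2r // coprime_sym.
Qed.

Lemma sum_gcdn_totient (F : nat -> nat) N : 0 < N ->
  \sum_(a < N) F (gcdn a N) =
  \sum_(n < N.+1 | (0 < n) && (n %| N)) totient n * F (N %/ n).
Proof.
move=> N_gt0.
under [RHS]eq_bigr => n /andP[n_gt0 n_dvd].
  rewrite -(count_gcdn_eq N_gt0 n_gt0 n_dvd) big_distrl /=.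
over.
rewrite exchange_big /=; apply: eq_bigr => a _.
set g := gcdn a N; have g_gt0 : 0 < g by rewrite gcdn_gt0 N_gt0 orbT.
have g_dvd : g %| N := dvdn_gcdr a N.
have Ng_lt : N %/ g < N.+1 by rewrite ltnS leq_div.
have Ng_div : (0 < N %/ g) && (N %/ g %| N) by rewrite divn_gt0 // dvdn_leq // dvdn_div.
rewrite (bigD1 (Ordinal Ng_lt)) //= divnA // mulKn // eqxx mul1n.
rewrite big1 ?addn0 // => n /andP[/andP[_ n_dvd] n_ne].
case: eqP => [g_eq | _]; last by rewrite mul0n.
by case/eqP: n_ne; apply: val_inj; rewrite /= g_eq divnA // mulKn.
Qed.

Section RotationAction.
Variables (T : finType) (n : nat).

Definition rot_ord (w : n.+1.-tuple T) (a : 'I_n.+1) : n.+1.-tuple T := rot_tuple a w.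

Lemma rot_ord1 : rot_ord^~ 1%g =1 id.
Proof. by move=> w; apply: val_inj; rewrite /= rot0. Qed.

Lemma rot_ordM w : act_morph rot_ord w.
Proof.
move=> a b; apply: val_inj => /=; have size_w : size w = n.+1 by rewrite size_tuple.
have a_le : a <= size w by rewrite size_w ltnW.
have b_le : b <= size w by rewrite size_w ltnW.
rewrite (rot_add_mod a_le b_le) size_w (addnC b).
case: ltngtP => [ab_lt | ab_gt | ab_eq]; first by rewrite modn_small.
  rewrite -{1}(subnK (ltnW ab_gt)) modnDr modn_small //.
  by move: (ltn_ord a) (ltn_ord b); lia.
by rewrite ab_eq modnn rot0; move: (rot_size w); rewrite size_w.
Qed.

Canonical rot_action := TotalAction rot_ord1 rot_ordM.

End RotationAction.

Lemma necklace_orbit n (w : n.+1.-tuple bool) :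
  necklace_of w = orbit (rot_action bool n) [set: 'I_n.+1] w.
Proof. by apply/setP => x; apply/imsetP/imsetP => [[i _ ->]|[i _ ->]]; exists i. Qed.

Lemma rot_acts_balanced n :
  [acts [set: 'I_n.+1], on [set w | balanced w] | rot_action bool n].
Proof.
apply/actsP => a _ w; rewrite !inE /balanced /=.
have rot_perm : perm_eq (rot a w) w by rewrite perm_rot.
by rewrite !(seq.permP rot_perm).
Qed.

Lemma Ccoef_burnside n :
  n.+1 * Ccoef n.+1 =
  \sum_(a in [set: 'I_n.+1]) #|('Fix_([set w | balanced w] | rot_action bool n)[a])%g|.
Proof.
rewrite (Frobenius_Cauchy (rot_acts_balanced n)) cardsT card_ord mulnC.
congr (#|pred_of_set _| * _); apply/setP => X.
by apply/imsetP/imsetP => -[w w_bal ->]; exists w;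
  rewrite ?necklace_orbit //; move: w_bal; rewrite !inE.
Qed.

Lemma Ccoef_totient N : 0 < N ->
  N * Ccoef N = \sum_(n < N.+1 | (0 < n) && (n %| N)) totient n * Scoef (N %/ n).
Proof.
case: N => // n _; rewrite Ccoef_burnside -(sum_gcdn_totient Scoef) //.
apply: eq_big => [a | a _]; first by rewrite inE.
have g_gt0 : 0 < gcdn a n.+1 by rewrite gcdn_gt0 orbT.
rewrite -(card_balanced g_gt0) -(@card_balanced_rot_fixed n.+1 a isT (ltnW (ltn_ord a))).
by congr #|pred_of_set _|; apply/setP => w; rewrite !inE sub1set inE.
Qed.

Lemma Scoef_double p : 0 < p -> Scoef (2 * p) = 'C(2 * p, p).
Proof. by move=> p_gt0; rewrite /Scoef muln_gt0 p_gt0 mul2n odd_double doubleK. Qed.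

Lemma Scoef_odd m : odd m -> Scoef m = 0.
Proof. by rewrite /Scoef => ->; rewrite andbF. Qed.

Lemma sum_cofactor (R : nmodType) (G : nat -> R) c N : 0 < c -> 0 < N ->
  (\sum_(p < N.+1 | (0 < p)%N && (c * p == N)%N) G p)%R =
  if c %| N then G (N %/ c) else 0%R.
Proof.
move=> c_gt0 N_gt0; case: ifPn => [c_dvd | c_ndvd].
  have p_lt : N %/ c < N.+1 by rewrite ltnS leq_div.
  rewrite (big_pred1 (Ordinal p_lt)) // => p /=.
  rewrite -val_eqE /= eq_sym eqn_div // [p * c]mulnC [N == _]eq_sym.
  case: eqP => [N_eq | _]; last by rewrite andbF.
  rewrite -N_eq muln_gt0 in N_gt0.
  by case/andP: N_gt0 => _ ->.
rewrite big_pred0 // => p /=; apply: contraNF c_ndvd => /andP[_ /eqP <-].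
exact: dvdn_mulr.
Qed.

Section RationalForm.
Local Open Scope ring_scope.

Lemma ratio_binomial_term (f c n p : nat) :
  (f%:R / n%:R) * ((1 / (2 * p)%:R) * c%:R) = (f * c)%:R / (n * (2 * p))%:R :> rat.
Proof.
rewrite !natrM !invfM mul1r -!mulrA; congr (_ * _).
by rewrite [RHS]mulrC -!mulrA.
Qed.

Lemma sum_necklace_term N n : (0 < N)%N ->
  \sum_(p < N.+1)
     (if [&& (0 < n)%N, (0 < p)%N & (2 * n * p == N)%N] then
         ((totient n)%:R / (n%:R)) * ((1 / (2 * p)%:R) * ('C(2 * p, p))%:R)
       else 0 : rat)
  = if (0 < n)%N && (n %| N)%N then (totient n * Scoef (N %/ n))%:R / N%:R else 0.
Proof.
move=> N_gt0; case: (posnP n) => [-> | n_gt0]; first by rewrite big1.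
have two_n_gt0 : (0 < 2 * n)%N by rewrite muln_gt0.
rewrite -big_mkcond /= (sum_cofactor
  (fun p => (totient n)%:R / n%:R * (1 / (2 * p)%:R * 'C(2 * p, p)%:R))) //.
case: ifPn => [/dvdnP[p N_eq] | ndvd2n].
  have p_gt0 : (0 < p)%N by move: N_gt0; rewrite N_eq muln_gt0 => /andP[].
  have N_div_n : (N %/ n = 2 * p)%N by rewrite N_eq mulnA mulnK // mulnC.
  have n_dvd : (n %| N)%N by rewrite N_eq dvdn_mull // dvdn_mull.
  have -> : (N %/ (2 * n) = p)%N by rewrite N_eq mulnK // muln_gt0 n_gt0.
  rewrite n_dvd N_div_n Scoef_double // ratio_binomial_term.
  by congr (_ / _%:R); rewrite N_eq; nia.
case: ifPn => // n_dvd; rewrite Scoef_odd ?muln0 ?mul0r //.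
apply: contraNT ndvd2n; rewrite -dvdn2 => two_dvd.
by rewrite -(divnK n_dvd) dvdn_pmul2r.
Qed.

End RationalForm.

Theorem mainTheorem4 (N : nat) (HN : (0 < N)%N) :
  ((Ccoef N)%:R : rat) =
    (\sum_(n < N.+1) \sum_(p < N.+1)
       if [&& (0 < n)%N, (0 < p)%N & (2 * n * p == N)%N] then
         ((totient n)%:R / (n%:R)) * ((1 / (2 * p)%:R) * ('C(2 * p, p))%:R)
       else 0)%R
  /\
  (N * Ccoef N =
     \sum_(n < N.+1 | (0 < n) && (n %| N)) totient n * Scoef (N %/ n))%N.
Proof.
split; last exact: Ccoef_totient.
rewrite (eq_bigr _ (fun (n : 'I_N.+1) _ => sum_necklace_term n HN)) -big_mkcond /=.
rewrite -mulr_suml -natr_sum -Ccoef_totient // natrM [(N%:R * _)%R]mulrC mulfK //.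
by rewrite pnatr_eq0 -lt0n.
Qed.
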